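(* (1) For every $r\in\mathbb N$, the category $\mathcal C_r$ is a full subcategory of $\mathcal C^{pol}\cap\mathcal C^{int}$ (each object of $\mathcal C_r$ being regarded as a $\mathbf U(\infty)$-module via $\zeta_r$). (2) For each $r\in\mathbb N$ there is a surjective algebra homomorphism $\mathbf U(\infty,r+1)\to\mathbf U(\infty,r)$ sending $\zeta_{r+1}(E_i),\zeta_{r+1}(F_i),\zeta_{r+1}(K_i)$ to $\zeta_r(E_i),\zeta_r(F_i),\zeta_r(K_i)$ respectively, for all $i\in\mathbb Z$. Hence $\mathcal C_r$ is a full subcategory of $\mathcal C_{r+1}$.
   Context: $v$ indeterminate. $\mathbf U(\infty)$ is the $\mathbb Q(v)$-algebra with generators $E_i,F_i,K_i,K_i^{-1}$ ($i\in\mathbb Z$) and relations: $K_iK_j=K_jK_i$, $K_iK_i^{-1}=1$; $K_iE_j=v^{\delta_{i,j}-\delta_{i,j+1}}E_jK_i$; $K_iF_j=v^{\delta_{i,j+1}-\delta_{i,j}}F_jK_i$; $E_iE_j=E_jE_i$, $F_iF_j=F_jF_i$ if $|i-j|>1$; $E_iF_j-F_jE_i=\delta_{i,j}\frac{\widetilde K_i-\widetilde K_i^{-1}}{v-v^{-1}}$, $\widetilde K_i=K_iK_{i+1}^{-1}$; $E_i^2E_j-(v+v^{-1})E_iE_jE_i+E_jE_i^2=0$ and likewise for $F$ if $|i-j|=1$; coproduct $\Delta(E_i)=E_i\otimes\widetilde K_i+1\otimes E_i$, $\Delta(F_i)=F_i\otimes1+\widetilde K_i^{-1}\otimes F_i$,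 $\Delta(K_j)=K_j\otimes K_j$. ${\bf\Omega}_\infty$ has basis $\{\omega_i\}_{i\in\mathbb Z}$ with $K_a\omega_b=v^{\delta_{a,b}}\omega_b$, $E_a\omega_b=\delta_{a+1,b}\omega_a$, $F_a\omega_b=\delta_{a,b}\omega_{a+1}$; ${\bf\Omega}_\infty^{\otimes r}$ is a $\mathbf U(\infty)$-module via $\Delta$. The Hecke algebra ${\boldsymbol{\mathcal H}}$ of $\mathfrak S_r$ over $\mathbb Q(v)$ (basis $\mathcal T_w$ with $\mathcal T_s\mathcal T_w=\mathcal T_{sw}$ if $\ell(sw)>\ell(w)$, else $(v-v^{-1})\mathcal T_w+\mathcal T_{sw}$) acts on the right by $(\omega_{i_1}\cdots\omega_{i_r})\mathcal T_{(j,j+1)}=\omega_{i_1}\cdots\omega_{i_{j+1}}\omega_{i_j}\cdots\omega_{i_r}$ if $i_j<i_{j+1}$; $=v\,\omega_{i_1}\cdots\omega_{i_r}$ if $i_j=i_{j+1}$; $=(v-v^{-1})\omega_{i_1}\cdots\omega_{i_r}+\omega_{i_1}\cdots\omega_{i_{j+1}}\omega_{i_j}\cdots\omega_{i_r}$ if $i_j>i_{j+1}$. ${\boldsymbol{\mathcal S}}(\infty,r)=\operatorname{End}_{\boldsymbol{\mathcal H}}({\bf\Omega}_\infty^{\otimes r})$; the commuting actions give $\zeta_r:\mathbf U(\infty)\to{\boldsymbol{\mathcal S}}(\infty,r)$, and $\mathbf U(\infty,r)=\zeta_r(\mathbf U(\infty))$. For a $\mathbf U(\infty)$-module $M$ and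 an integer sequence $\lambda=(\lambda_i)_{i\in\mathbb Z}$, $M_\lambda=\{x:K_ix=v^{\lambda_i}x\ \forall i\}$; $M$ is a weight module if $M=\bigoplus_\lambda M_\lambda$ (over all integer sequences). $\mathcal C^{pol}$: weight modules all of whose weights $\lambda$ (with $M_\lambda\ne0$) are finitely supported with nonnegative entries. $\mathcal C^{int}$: weight modules such that for all $x\in M$ and $i$, $E_i^nx=F_i^nx=0$ for $n\gg0$. $\mathcal C_r$: the category of $\mathbf U(\infty,r)$-modules which, regarded as $\mathbf U(\infty)$-modules via $\zeta_r$, are weight modules (a full subcategory of $\mathbf U(\infty,r)$-modules); via the homomorphism in (2), $\mathbf U(\infty,r)$-modules are $\mathbf U(\infty,r+1)$-modules. *)

From Stdlib Require List.
From HB Require Import structures.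
From mathcomp Require Import all_boot all_order all_algebra.
From mathcomp Require Import fraction.
From mathcomp Require Import finmap.
From mathcomp.multinomials Require Import monalg.
Set Implicit Arguments. Unset Strict Implicit. Unset Printing Implicit Defensive.
Import Order.TTheory GRing.Theory Num.Theory.
Local Open Scope ring_scope.

Definition Qv : fieldType := {fraction {poly rat}}.
Definition v : Qv := @FracField.tofrac _ ('X : {poly rat}).

Inductive gen := GE of int | GF of int | GK of int | GKi of int.

(* Noncommutative polynomial expressions in the generators with coefficients
   in Q(v) (elements of the free algebra on the generators). *)
Inductive term :=
| Tgen of gen
| Tone
| Tadd of term & term
| Tscale of Qv & term
| Tmul of term & term.

Fixpoint evalOp (M : lmodType Qv) (rho : gen -> M -> M) (t : term) : M -> M :=
  match t with
  | Tgen g => rho g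
  | Tone => id
  | Tadd s u => fun x => evalOp rho s x + evalOp rho u x
  | Tscale c s => fun x => c *: evalOp rho s x
  | Tmul s u => fun x => evalOp rho s (evalOp rho u x)
  end.

(* Basis vector omega_{i_1} ... omega_{i_r} is << (i_1,...,i_r) >>. *)
Definition Omega (r : nat) : lmodType Qv := {malg Qv[r.-tuple int]}.

Definition lin_ext r (f : r.-tuple int -> Omega r) (x : Omega r) : Omega r :=
  \sum_(k <- msupp x) x@_k *: f k.

Definition tset r (k : r.-tuple int) (j : 'I_r) (b : int) : r.-tuple int :=
  [tuple (if i == j then b else tnth k i) | i < r].

(* exponent of Ktilde_a = K_a K_{a+1}^{-1} on the factor omega_b *)
Definition ktexp (a b : int) : int := (b == a)%:Z - (b == a + 1)%:Z.

(* Delta^{(r)}(E_a) = sum_j 1^{(x)(j-1)} (x) E_a (x) Ktilde_a^{(x)(r-j)} *)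
Definition E_basis r (a : int) (k : r.-tuple int) : Omega r :=
  \sum_(j < r | tnth k j == a + 1)
     (v ^ (\sum_(l < r | (j < l)%N) ktexp a (tnth k l))) *: << tset k j a >>.

(* Delta^{(r)}(F_a) = sum_j Ktilde_a^{-1 (x)(j-1)} (x) F_a (x) 1^{(x)(r-j)} *)
Definition F_basis r (a : int) (k : r.-tuple int) : Omega r :=
  \sum_(j < r | tnth k j == a)
     (v ^ (- \sum_(l < r | (l < j)%N) ktexp a (tnth k l))) *: << tset k j (a + 1) >>.

Definition K_basis r (a : int) (k : r.-tuple int) : Omega r :=
  v ^ ((count (pred1 a) k)%:Z) *: << k >>.

Definition Ki_basis r (a : int) (k : r.-tuple int) : Omega r :=
  v ^ (- (count (pred1 a) k)%:Z) *: << k >>.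

Definition zeta r (g : gen) : Omega r -> Omega r :=
  match g with
  | GE a => lin_ext (E_basis a)
  | GF a => lin_ext (F_basis a)
  | GK a => lin_ext (K_basis a)
  | GKi a => lin_ext (Ki_basis a)
  end.

(* U(oo,r) = zeta_r(U(oo)): the set of endomorphisms of Omega^{(x) r}
   obtained by evaluating expressions in the generators. *)
Definition Uinf r : (Omega r -> Omega r) -> Prop :=
  fun X => exists t : term, X = evalOp (@zeta r) t.

Definition gens_linear (M : lmodType Qv) (rho : gen -> M -> M) : Prop :=
  forall g, linear (rho g).

(* A U(oo,r)-module structure on M, given through the action of the
   generators: the assignment zeta_r(t) |-> t acting on M is well defined,
   i.e. it factors through U(oo,r) = zeta_r(U(oo)). *)
Definition is_Ur_module r (M : lmodType Qv) (rho : gen -> M -> M) : Prop :=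
  gens_linear rho /\
  forall t : term, (forall x : Omega r, evalOp (@zeta r) t x = 0) ->
                   forall m : M, evalOp rho t m = 0.

Definition Ur_hom (M N : lmodType Qv) (rhoM : gen -> M -> M)
  (rhoN : gen -> N -> N) (f : M -> N) : Prop :=
  linear f /\ forall t m, f (evalOp rhoM t m) = evalOp rhoN t (f m).

Definition U_hom (M N : lmodType Qv) (rhoM : gen -> M -> M)
  (rhoN : gen -> N -> N) (f : M -> N) : Prop :=
  linear f /\ forall g m, f (rhoM g m) = rhoN g (f m).

Definition weight_vec (M : lmodType Qv) (rho : gen -> M -> M)
  (lam : int -> int) (x : M) : Prop :=
  forall i, rho (GK i) x = v ^ (lam i) *: x.

(* M = sum_lambda M_lambda (the sum is automatically direct) *)
Definition weight_module (M : lmodType Qv) (rho : gen -> M -> M) : Prop :=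
  forall x : M, exists s : seq ((int -> int) * M),
    (forall p, Stdlib.Lists.List.In p s -> weight_vec rho p.1 p.2) /\
    x = \sum_(p <- s) p.2.

Definition finitely_supported (lam : int -> int) : Prop :=
  exists N : nat, forall i : int, (N < absz i)%N -> lam i = 0.

Definition in_Cpol (M : lmodType Qv) (rho : gen -> M -> M) : Prop :=
  weight_module rho /\
  forall (lam : int -> int) (x : M), x <> 0 -> weight_vec rho lam x ->
    finitely_supported lam /\ forall i, 0 <= lam i.

Definition in_Cint (M : lmodType Qv) (rho : gen -> M -> M) : Prop :=
  weight_module rho /\
  forall (x : M) (i : int), exists N : nat, forall n : nat, (N <= n)%N ->
    iter n (rho (GE i)) x = 0 /\ iter n (rho (GF i)) x = 0.

Definition in_Cr r (M : lmodType Qv) (rho : gen -> M -> M) : Prop :=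
  is_Ur_module r rho /\ weight_module rho.

(* Let u be an element of U(oo) and c an integer outside {a, a+1} for every
   index a occurring in u.  The embedding x |-> omega_c (x) x of Omega^(x)r into Omega^(x)(r+1) intertwines
   the actions of u.  Hence every element of U(oo) vanishing on Omega^(x)(r+1)
   vanishes on Omega^(x)r: this gives the restriction U(oo,r+1) -> U(oo,r) and
   C_r in C_(r+1).  For (1), K_i acts on omega_k by v^(number of i's in k), so
   suitable products of factors K_i - v^c vanish on Omega^(x)r; on a weight
   vector they act by scalars, which forces every weight to lie in [0, r]^Z and
   to be supported on at most r indices.  E_i (resp. F_i) lowers the number of
   entries equal to i+1 (resp. i) by one, so its (r+1)-th power vanishes. *)

From HB Require Import structures.
From mathcomp Require Import all_boot all_order all_algebra.
From mathcomp Require Import fraction finmap.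
From mathcomp.multinomials Require Import monalg.
From mathcomp Require Import zify ring.
From Stdlib Require Import Classical_Prop ClassicalEpsilon FunctionalExtensionality.
Set Implicit Arguments. Unset Strict Implicit. Unset Printing Implicit Defensive.
Import GRing.Theory.
Local Open Scope ring_scope.

Section MalgLinearExtension.
Variables (K : choiceType) (V : lmodType Qv).

Definition mlin (f : K -> V) (x : {malg Qv[K]}) : V :=
  \sum_(k <- msupp x) x@_k *: f k.

Lemma mlinEw f (d : {fset K}) x : (msupp x `<=` d)%fset ->
  mlin f x = \sum_(k <- d) x@_k *: f k.
Proof.
move=> le; rewrite /mlin (big_fset_incl _ le) //= => k _ /mcoeff_outdom ->.
by rewrite scale0r.
Qed.

Lemma mlin_is_linear f : linear (mlin f).
Proof.
move=> a x y; set d := (msupp (a *: x + y) `|` (msupp x `|` msupp y))%fset.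
rewrite (@mlinEw f d) ?fsubsetUl // (@mlinEw f d x); last first.
  by rewrite (fsubset_trans _ (fsubsetUr _ _)) ?fsubsetUl.
rewrite (@mlinEw f d y); last by rewrite (fsubset_trans _ (fsubsetUr _ _)) ?fsubsetUr.
rewrite scaler_sumr -big_split /=; apply: eq_bigr => k _.
by rewrite mcoeffD mcoeffZ scalerDl scalerA.
Qed.

HB.instance Definition _ f :=
  GRing.isLinear.Build Qv _ _ _ (mlin f) (mlin_is_linear f).

Lemma mlinU f k : mlin f << k >> = f k.
Proof. by rewrite /mlin msuppU oner_eq0 big_seq_fset1 mcoeffUU scale1r. Qed.

Lemma eq_mlin f g : f =1 g -> mlin f =1 mlin g.
Proof. by move=> e x; apply: eq_bigr => k _; rewrite e. Qed.

End MalgLinearExtension.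


Lemma mlin_comp (K K' : choiceType) (V : lmodType Qv)
    (f : K -> {malg Qv[K']}) (g : K' -> V) x :
  mlin g (mlin f x) = mlin (fun k => mlin g (f k)) x.
Proof. by rewrite [mlin f x]/mlin linear_sum; apply: eq_bigr => k _; rewrite linearZ. Qed.

Lemma mcoeff_mlin_inj (K K' : choiceType) (h : K -> K') (d : K -> Qv) x k :
  injective h -> (mlin (fun k => d k *: << h k >>) x)@_(h k) = x@_k * d k.
Proof.
move=> h_inj; rewrite /mlin raddf_sum /=.
under eq_bigr do rewrite mcoeffZ mcoeffZ mcoeffU (inj_eq h_inj) mulrA.
have [kx|knx] := msuppP.
  rewrite (bigD1_seq k) ?fset_uniq //= eqxx mulr1 big1 ?addr0 // => i /negbTE->.
  by rewrite mulr0.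
rewrite big_seq big1 ?mul0r // => i ix.
by case: eqP ix => [->|]; rewrite ?mulr0 // (negbTE knx).
Qed.

Lemma count_tnth r (p : pred int) (k : r.-tuple int) :
  count p k = (\sum_(i < r) p (tnth k i))%N.
Proof.
by rewrite -sum1_count big_tuple big_mkcond; apply: eq_bigr => i _; case: ifP.
Qed.

Lemma count_tset r (p : pred int) (k : r.-tuple int) j b :
  (count p (tset k j b) + p (tnth k j) = count p k + p b)%N.
Proof.
rewrite !count_tnth (bigD1 j) //= [in RHS](bigD1 j) //= tnth_mktuple eqxx.
under eq_bigr => i /negbTE ij do rewrite tnth_mktuple ij.
lia.
Qed.

Lemma tset_cons r c (k : r.-tuple int) j b :
  tset (cons_tuple c k) (lift ord0 j) b = cons_tuple c (tset k j b).
Proof.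
apply: eq_from_tnth => i; case: (unliftP ord0 i) => [i'|] ->.
  by rewrite tnth_mktuple !tnthS tnth_mktuple (inj_eq (@lift_inj _ ord0)).
by rewrite tnth_mktuple (negbTE (neq_lift _ _)) !tnth0.
Qed.

Lemma cons_tuple_inj r c : injective (fun k : r.-tuple int => cons_tuple c k).
Proof. by move=> k1 k2 /(congr1 (fun t => behead (tval t))) /val_inj. Qed.

Definition cons_ext r (c : int) : Omega r -> Omega r.+1 :=
  mlin (fun k : r.-tuple int => << cons_tuple c k >>).

HB.instance Definition _ r c := GRing.Linear.on (@cons_ext r c).

Lemma cons_extU r c (k : r.-tuple int) : cons_ext c << k >> = << cons_tuple c k >>.
Proof. exact: mlinU. Qed.

Lemma cons_ext_inj r c : injective (@cons_ext r c).
Proof.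
apply: raddf_inj => x /= x0; apply/malgP => k.
have := mcoeff_mlin_inj (fun _ => 1) x k (@cons_tuple_inj r c).
rewrite (@eq_mlin _ _ _ (fun k => << cons_tuple c k >>)) => [|k']; last first.
  by rewrite scale1r.
by rewrite -/(cons_ext c x) x0 !mcoeff0 mulr1.
Qed.

Lemma mlin_cons_ext r (B' : r.+1.-tuple int -> Omega r.+1)
    (B : r.-tuple int -> Omega r) c x :
  (forall k, B' (cons_tuple c k) = cons_ext c (B k)) ->
  mlin B' (cons_ext c x) = cons_ext c (mlin B x).
Proof.
by move=> hB; rewrite /cons_ext !mlin_comp; apply: eq_mlin => k; rewrite mlinU hB.
Qed.

Definition far (c a : int) : bool := (c != a) && (c != a + 1).

Lemma ktexp_far a c : far c a -> ktexp a c = 0.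
Proof. by case/andP=> ca ca1; rewrite /ktexp (negbTE ca) (negbTE ca1). Qed.

Lemma E_basis_cons r a c (k : r.-tuple int) : far c a ->
  E_basis a (cons_tuple c k) = cons_ext c (E_basis a k).
Proof.
case/andP=> _ ca1; rewrite /E_basis raddf_sum.
rewrite big_mkcond big_ord_recl /= tnth0 (negbTE ca1) add0r -big_mkcond /=.
apply: eq_big => [j|j _]; first by rewrite tnthS.
rewrite linearZ /= cons_extU tset_cons; congr (v ^ _ *: _).
rewrite big_mkcond big_ord_recl /= add0r -big_mkcond /=.
by apply: eq_big => [l|l _]; rewrite ?tnthS.
Qed.

Lemma F_basis_cons r a c (k : r.-tuple int) : far c a ->
  F_basis a (cons_tuple c k) = cons_ext c (F_basis a k).
Proof.
move=> cfar; rewrite /F_basis raddf_sum.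
have /andP[ca _] := cfar.
rewrite big_mkcond big_ord_recl /= tnth0 (negbTE ca) add0r -big_mkcond /=.
apply: eq_big => [j|j _]; first by rewrite tnthS.
rewrite linearZ /= cons_extU tset_cons; congr (v ^ (- _) *: _).
rewrite big_mkcond big_ord_recl /= tnth0 ktexp_far // add0r -big_mkcond /=.
by apply: eq_big => [l|l _]; rewrite ?tnthS.
Qed.

Lemma K_basis_cons r a c (k : r.-tuple int) : c != a ->
  K_basis a (cons_tuple c k) = cons_ext c (K_basis a k).
Proof. by move=> ca; rewrite /K_basis linearZ /= cons_extU /= (negbTE ca). Qed.

Lemma Ki_basis_cons r a c (k : r.-tuple int) : c != a ->
  Ki_basis a (cons_tuple c k) = cons_ext c (Ki_basis a k).
Proof. by move=> ca; rewrite /Ki_basis linearZ /= cons_extU /= (negbTE ca). Qed.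

Definition gen_index (g : gen) : int := match g with GE a | GF a | GK a | GKi a => a end.

Lemma zeta_cons_ext r g c (x : Omega r) : far c (gen_index g) ->
  zeta g (cons_ext c x) = cons_ext c (zeta g x).
Proof.
case: g => a /= cfar; have /andP[ca _] := cfar; apply: mlin_cons_ext => k.
- exact: E_basis_cons.
- exact: F_basis_cons.
- exact: K_basis_cons.
- exact: Ki_basis_cons.
Qed.

Fixpoint term_indices (t : term) : seq int :=
  match t with
  | Tgen g => [:: gen_index g]
  | Tone => [::]
  | Tadd s u | Tmul s u => term_indices s ++ term_indices u
  | Tscale _ s => term_indices s
  end.

Lemma evalOp_cons_ext r t c (x : Omega r) : all (far c) (term_indices t) ->
  evalOp (@zeta r.+1) t (cons_ext c x) = cons_ext c (evalOp (@zeta r) t x).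
Proof.
elim: t x => [g|| s IHs u IHu | a s IHs | s IHs u IHu] x /=.
- by rewrite andbT; apply: zeta_cons_ext.
- by [].
- by rewrite all_cat => /andP[hs hu]; rewrite IHs // IHu // raddfD.
- by move=> hs; rewrite IHs // linearZ.
- by rewrite all_cat => /andP[hs hu]; rewrite IHu // IHs.
Qed.

Lemma absz_le_sumn (i : int) s : i \in s -> (absz i <= sumn (map absz s))%N.
Proof. by elim: s => //= j s IH; rewrite inE => /orP[/eqP->|/IH]; lia. Qed.

Lemma exists_far (s : seq int) : exists c, all (far c) s.
Proof.
exists (sumn (map absz s)).+2%:Z; apply/allP => a /absz_le_sumn a_le.
by rewrite /far; apply/andP; split; apply/eqP; lia.
Qed.

Lemma evalOp_vanish_succ r t : (forall x : Omega r.+1, evalOp (@zeta r.+1) t x = 0) ->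
  forall x : Omega r, evalOp (@zeta r) t x = 0.
Proof.
move=> t0 x; have [c cfar] := exists_far (term_indices t).
by apply: (@cons_ext_inj r c); rewrite -evalOp_cons_ext // t0 raddf0.
Qed.

Section Support.
Variable K : choiceType.

Definition supported_in (P : pred K) (y : {malg Qv[K]}) := {subset msupp y <= P}.

Lemma supported_in_sum P I (s : seq I) (Q : pred I) (F : I -> {malg Qv[K]}) :
  (forall i, Q i -> supported_in P (F i)) -> supported_in P (\sum_(i <- s | Q i) F i).
Proof.
move=> hF; elim/big_ind: _ => [k|y z hy hz k|]; last exact: hF.
- by rewrite msupp0 in_fset0.
- by move/(fsubsetP (msuppD_le y z)); rewrite in_fsetU => /orP[/hy|/hz].
Qed.

Lemma supported_inZ P a y : supported_in P y -> supported_in P (a *: y).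
Proof. by move=> hy k /(fsubsetP (msuppZ_le a y)) /hy. Qed.

Lemma supported_inU (P : pred K) k : P k -> supported_in P << k >>.
Proof. by move=> Pk k'; rewrite msuppU oner_eq0 in_fset1 => /eqP ->. Qed.

Lemma mlin_supported P (f : K -> {malg Qv[K]}) x :
  (forall k, k \in msupp x -> supported_in P (f k)) -> supported_in P (mlin f x).
Proof. by move=> hf; rewrite /mlin big_seq; apply: supported_in_sum => k /hf /supported_inZ. Qed.

Lemma iter_mlin_lowering_eq0 (w : K -> nat) m (B : K -> {malg Qv[K]}) :
  (forall k, w k <= m)%N ->
  (forall k, supported_in [pred k' | (w k').+1 == w k] (B k)) ->
  forall n x, (m < n)%N -> iter n (mlin B) x = 0.
Proof.
move=> w_le B_lower.
have supp_iter n x : supported_in [pred k | n + w k <= m]%N (iter n (mlin B) x).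
  elim: n => [|n IH] /=; first by move=> k _; rewrite inE add0n.
  apply: mlin_supported => k /IH hk kp /(B_lower k); rewrite !inE in hk *.
  by move=> /eqP; lia.
move=> n x mn; apply/malgP => k; rewrite mcoeff0; apply: mcoeff_outdom.
by apply/negP => /(supp_iter n x); rewrite inE; lia.
Qed.

End Support.

Lemma E_basis_lowers r a (k : r.-tuple int) :
  supported_in [pred k' : r.-tuple int |
    (count (pred1 (a + 1)) k').+1 == count (pred1 (a + 1)) k] (E_basis a k).
Proof.
apply: supported_in_sum => j /eqP kj; apply/supported_inZ/supported_inU.
have := count_tset (pred1 (a + 1)) k j a; rewrite /= kj eqxx.
by case: eqP => [|_]; [lia | rewrite addn0 addn1 => ->].
Qed.

Lemma F_basis_lowers r a (k : r.-tuple int) :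
  supported_in [pred k' : r.-tuple int |
    (count (pred1 a) k').+1 == count (pred1 a) k] (F_basis a k).
Proof.
apply: supported_in_sum => j /eqP kj; apply/supported_inZ/supported_inU.
have := count_tset (pred1 a) k j (a + 1); rewrite /= kj eqxx.
by case: eqP => [|_]; [lia | rewrite addn0 addn1 => ->].
Qed.

Lemma count_tuple_le r (p : pred int) (k : r.-tuple int) : (count p k <= r)%N.
Proof. by have := count_size p k; rewrite size_tuple. Qed.

Lemma zetaE_nilpotent r a n (x : Omega r) : (r < n)%N -> iter n (zeta (GE a)) x = 0.
Proof. exact: (iter_mlin_lowering_eq0 (count_tuple_le _) (@E_basis_lowers r a)). Qed.

Lemma zetaF_nilpotent r a n (x : Omega r) : (r < n)%N -> iter n (zeta (GF a)) x = 0.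
Proof. exact: (iter_mlin_lowering_eq0 (count_tuple_le _) (@F_basis_lowers r a)). Qed.

Lemma v_neq0 : v != 0.
Proof. by rewrite /v tofrac_eq0 polyX_eq0. Qed.

Lemma expr_v_neq1 n : v ^+ n.+1 != 1.
Proof.
rewrite /v -tofracXn -tofrac1 tofrac_eq; apply/eqP.
by move=> /(congr1 (fun p : {poly rat} => size p)); rewrite size_polyXn size_poly1.
Qed.

Lemma expfz_v_eq1 (m : int) : v ^ m = 1 -> m = 0.
Proof.
case: m => [[|n]|n] // => [/eqP|]; first by rewrite (negbTE (expr_v_neq1 n)).
rewrite NegzE -exprz_inv => h; have /eqP : (v^-1) ^+ n.+1 = 1 by exact: h.
by rewrite exprVn invr_eq1 (negbTE (expr_v_neq1 n)).
Qed.

Lemma expfz_v_inj : injective (fun m : int => v ^ m).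
Proof.
move=> m n /= e; apply/eqP; rewrite -subr_eq0; apply/eqP/expfz_v_eq1.
by rewrite expfzDr ?v_neq0 // e -expfzDr ?v_neq0 // subrr.
Qed.

Definition Kprod (ps : seq (int * Qv)) : term :=
  foldr (fun p t => Tmul (Tadd (Tgen (GK p.1)) (Tscale (- p.2) Tone)) t) Tone ps.

Lemma mcoeff_Kprod r ps (y : Omega r) k :
  (evalOp (@zeta r) (Kprod ps) y)@_k =
  y@_k * \prod_(p <- ps) (v ^ (count (pred1 p.1) k)%:Z - p.2).
Proof.
elim: ps => [|p ps IH] /=; first by rewrite big_nil mulr1.
set z := evalOp _ _ y; rewrite mcoeffD mcoeffZ.
have -> : lin_ext (K_basis p.1) z =
  mlin (fun k : r.-tuple int => v ^ (count (pred1 p.1) k)%:Z *: << id k >>) z by [].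
by rewrite (mcoeff_mlin_inj _ _ _ (@inj_id _)) IH big_cons; ring.
Qed.

Lemma evalOp_Kprod_weight (M : lmodType Qv) (rho : gen -> M -> M) lam x ps :
  gens_linear rho -> weight_vec rho lam x ->
  evalOp rho (Kprod ps) x = (\prod_(p <- ps) (v ^ lam p.1 - p.2)) *: x.
Proof.
move=> rho_lin hx; elim: ps => [|p ps IH] /=; first by rewrite big_nil scale1r.
rewrite IH (GRing.semilinear_linear (rho_lin (GK p.1))).1 hx /= !scalerA -scalerDl big_cons.
by congr (_ *: _); ring.
Qed.

Lemma Kprod_weight_eq0 r (M : lmodType Qv) (rho : gen -> M -> M) lam x ps :
  is_Ur_module r rho -> x <> 0 -> weight_vec rho lam x ->
  (forall k : r.-tuple int, \prod_(p <- ps) (v ^ (count (pred1 p.1) k)%:Z - p.2) = 0) ->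
  \prod_(p <- ps) (v ^ lam p.1 - p.2) = 0.
Proof.
move=> [rho_lin rho_fact] xn0 hx ps0.
have Kprod0 y : evalOp (@zeta r) (Kprod ps) y = 0.
  by apply/malgP => k; rewrite mcoeff_Kprod ps0 mulr0 mcoeff0.
have /eqP := rho_fact _ Kprod0 x; rewrite (evalOp_Kprod_weight _ rho_lin hx).
by rewrite scaler_eq0 => /orP[/eqP //|/eqP x0].
Qed.

Lemma finitely_supportedP (lam : int -> int) r :
  (forall s : seq int, uniq s -> all (fun i => lam i != 0) s -> (size s <= r)%N) ->
  finitely_supported lam.
Proof.
move=> size_le; apply: NNPP => not_fs.
have far_support N : exists i, (N < absz i)%N /\ lam i != 0.
  apply: NNPP => hN; apply: not_fs; exists N => i Ni.
  by apply/eqP/negPn/negP => lami; apply: hN; exists i.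
have long n : exists s, [/\ uniq s, all (fun i => lam i != 0) s & size s = n].
  elim: n => [|n [s [us als ss]]]; first by exists [::].
  have [i [Ni lami]] := far_support (sumn (map absz s)).
  exists (i :: s); rewrite /= us lami ss; split=> //.
  by rewrite andbT; apply/negP => /absz_le_sumn; lia.
have [s [us als ss]] := long r.+1.
by have := size_le s us als; rewrite ss ltnn.
Qed.

Section WeightsOfCr.
Variables (r : nat) (M : lmodType Qv) (rho : gen -> M -> M).
Hypothesis rhoU : is_Ur_module r rho.
Variables (lam : int -> int) (x : M).
Hypotheses (xn0 : x <> 0) (hx : weight_vec rho lam x).

(* Each omega_k has K_i-eigenvalue v^c with 0 <= c <= r,
   so prod_(c <= r) (K_i - v^c) = 0 on Omega^(x)r. *)
Lemma weight_ge0 i : 0 <= lam i.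
Proof.
have := Kprod_weight_eq0 (ps := [seq (i, v ^ c%:Z) | c <- iota 0 r.+1]) rhoU xn0 hx.
rewrite big_map => /(_ _)/eqP; rewrite prodf_seq_eq0 => /(_ _)/hasP[].
  move=> k; apply/eqP; rewrite big_map prodf_seq_eq0; apply/hasP.
  exists (count (pred1 i) k); last by rewrite /= subrr.
  by rewrite mem_iota add0n ltnS count_tuple_le.
by move=> c _; rewrite /= subr_eq0 => /eqP /expfz_v_inj ->.
Qed.

(* A tuple of length r misses one of any r+1 distinct indices, so
   prod_(i in s) (K_i - 1) = 0 on Omega^(x)r whenever size s = r+1. *)
Lemma weight_finitely_supported : finitely_supported lam.
Proof.
apply: (@finitely_supportedP _ r) => s us als; rewrite leqNgt; apply/negP => rs.
pose s' := take r.+1 s.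
have us' : uniq s' by rewrite take_uniq.
have ss' : size s' = r.+1 := size_takel rs.
have := Kprod_weight_eq0 (ps := [seq (i, 1) | i <- s']) rhoU xn0 hx.
rewrite big_map => /(_ _)/eqP; rewrite prodf_seq_eq0 => /(_ _)/hasP[].
  move=> k; apply/eqP; rewrite big_map prodf_seq_eq0; apply/hasP.
  have [i i_in ik] : exists2 i, i \in s' & i \notin k.
    apply/hasP; rewrite -[has _ _]negbK -all_predC; apply/negP => /allP sub.
    have : {subset s' <= k} by move=> j /sub /negbNE.
    by move/(uniq_leq_size us'); rewrite ss' size_tuple ltnn.
  by exists i => //=; rewrite (count_memPn ik) subrr.
move=> i /mem_take i_in /=; rewrite subr_eq0 => /eqP /expfz_v_eq1 lami.
by move/allP: als => /(_ i i_in); rewrite lami.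
Qed.

End WeightsOfCr.

Lemma Cr_in_Cpol r (M : lmodType Qv) (rho : gen -> M -> M) : in_Cr r rho -> in_Cpol rho.
Proof.
move=> [rhoU rhoW]; split=> // lam x xn0 hx.
exact: (conj (weight_finitely_supported rhoU xn0 hx) (weight_ge0 rhoU xn0 hx)).
Qed.

Fixpoint term_pow n t := if n is n.+1 then Tmul t (term_pow n t) else Tone.

Lemma evalOp_term_pow (M : lmodType Qv) (rho : gen -> M -> M) n t x :
  evalOp rho (term_pow n t) x = iter n (evalOp rho t) x.
Proof. by elim: n => //= n ->. Qed.

Lemma Cr_in_Cint r (M : lmodType Qv) (rho : gen -> M -> M) : in_Cr r rho -> in_Cint rho.
Proof.
move=> [[_ rho_fact] rhoW]; split=> // x i; exists r.+1 => n rn.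
by split; rewrite -(evalOp_term_pow rho n (Tgen _)); apply: rho_fact => y;
  rewrite evalOp_term_pow; [exact: zetaE_nilpotent | exact: zetaF_nilpotent].
Qed.

Lemma Ur_homE (M N : lmodType Qv) (rhoM : gen -> M -> M) (rhoN : gen -> N -> N) f :
  Ur_hom rhoM rhoN f <-> U_hom rhoM rhoN f.
Proof.
split=> -[f_lin f_comm]; split=> //; first by move=> g; apply: (f_comm (Tgen g)).
have [fZ fD] := GRing.semilinear_linear f_lin.
by elim=> [g|| s IHs u IHu | a s IHs | s IHs u IHu] m //=;
  rewrite ?fD ?fZ ?IHs ?IHu.
Qed.

Lemma evalOp_eq_succ r t t' :
  evalOp (@zeta r.+1) t = evalOp (@zeta r.+1) t' -> evalOp (@zeta r) t = evalOp (@zeta r) t'.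
Proof.
move=> e; apply: functional_extensionality => x; apply/eqP; rewrite -subr_eq0.
have diff0 y : evalOp (@zeta r.+1) (Tadd t (Tscale (-1) t')) y = 0.
  by rewrite /= e scaleN1r subrr.
by have := evalOp_vanish_succ diff0 x; rewrite /= scaleN1r => ->.
Qed.

(* U(oo,r+1) -> U(oo,r), zeta_(r+1)(t) |-> zeta_r(t), defined by choosing a
   representing term; outside U(oo,r+1) the value is irrelevant. *)
Definition restrict r (X : Omega r.+1 -> Omega r.+1) : Omega r -> Omega r :=
  match excluded_middle_informative (exists t, X = evalOp (@zeta r.+1) t) with
  | left h => evalOp (@zeta r) (proj1_sig (constructive_indefinite_description _ h))
  | right _ => id
  end.

Lemma restrict_evalOp r t : restrict (evalOp (@zeta r.+1) t) = evalOp (@zeta r) t.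
Proof.
rewrite /restrict; case: excluded_middle_informative => [h|[]]; last by exists t.
by case: constructive_indefinite_description => t' /= e; apply: evalOp_eq_succ.
Qed.

Lemma Cr_in_Cr_succ r (M : lmodType Qv) (rho : gen -> M -> M) :
  in_Cr r rho -> in_Cr r.+1 rho.
Proof.
move=> [[rho_lin rho_fact] rhoW]; split=> //; split=> // t t0.
exact/rho_fact/evalOp_vanish_succ.
Qed.

Theorem proposition11p1 :
  (* (1) C_r is a full subcategory of C^pol /\ C^int *)
  (forall (r : nat),
     (forall (M : lmodType Qv) (rho : gen -> M -> M),
        in_Cr r rho -> in_Cpol rho /\ in_Cint rho) /\
     (forall (M N : lmodType Qv) (rhoM : gen -> M -> M) (rhoN : gen -> N -> N)
             (f : M -> N),
        in_Cr r rhoM -> in_Cr r rhoN ->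
        (Ur_hom rhoM rhoN f <-> U_hom rhoM rhoN f))) /\
  (* (2) surjective algebra homomorphism U(oo,r+1) -> U(oo,r) on generators *)
  (forall (r : nat),
     exists phi : (Omega r.+1 -> Omega r.+1) -> (Omega r -> Omega r),
       (forall X, Uinf X -> Uinf (phi X)) /\
       (forall Y, Uinf Y -> exists X, Uinf X /\ phi X = Y) /\
       (forall X Y, Uinf X -> Uinf Y ->
          phi (fun x => X x + Y x) = (fun y => phi X y + phi Y y)) /\
       (forall (c : Qv) X, Uinf X ->
          phi (fun x => c *: X x) = (fun y => c *: phi X y)) /\
       (forall X Y, Uinf X -> Uinf Y ->
          phi (fun x => X (Y x)) = (fun y => phi X (phi Y y))) /\
       phi id = id /\
       (forall i : int,
          phi (@zeta r.+1 (GE i)) = @zeta r (GE i) /\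
          phi (@zeta r.+1 (GF i)) = @zeta r (GF i) /\
          phi (@zeta r.+1 (GK i)) = @zeta r (GK i))) /\
  (* hence C_r is a full subcategory of C_{r+1} (on objects; morphisms of
     both categories are the linear maps commuting with the action) *)
  (forall (r : nat) (M : lmodType Qv) (rho : gen -> M -> M),
     in_Cr r rho -> in_Cr r.+1 rho).
Proof.
split; [|split; last exact: Cr_in_Cr_succ].
  move=> r; split=> [M rho rhoC | *]; last exact: Ur_homE.
  by split; [apply: Cr_in_Cpol rhoC | apply: Cr_in_Cint rhoC].
move=> r; exists (@restrict r).
have E := @restrict_evalOp r.
split; [|split; [|split; [|split; [|split; [|split]]]]].
- by move=> _ [t ->]; exists t; rewrite E.
- by move=> _ [t ->]; exists (evalOp (@zeta r.+1) t); split; [exists t | exact: E].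
- by move=> _ _ [t ->] [u ->]; rewrite !E; exact: E (Tadd t u).
- by move=> c _ [t ->]; rewrite !E; exact: E (Tscale c t).
- by move=> _ _ [t ->] [u ->]; rewrite !E; exact: E (Tmul t u).
- exact: (E Tone).
- by move=> i; do !split; [exact: (E (Tgen (GE i))) | exact: (E (Tgen (GF i))) | exact: (E (Tgen (GK i)))].
Qed.
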